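(* For every formula $\varphi$ of epistemic logic, $\varphi$ is valid with respect to the class of all EL models if and only if $T(\varphi)$ is valid with respect to the class of all agent-knowledge models.
   Context: Epistemic logic: fix disjoint sets $\mathbf{Prop}$ (propositional variables) and $\mathbf{A}$ (agents). Formulas: $\varphi ::= p \mid \neg\varphi \mid \varphi\land\varphi \mid K_i\varphi$ ($p\in\mathbf{Prop}$, $i\in\mathbf{A}$). An EL model is $(W,(R_i)_{i\in\mathbf{A}},V)$ with $W$ non-empty, each $R_i$ a binary relation on $W$, $V:\mathbf{Prop}\to\mathcal{P}(W)$; $w\models p$ iff $w\in V(p)$, Boolean clauses as usual, $w\models K_i\varphi$ iff $v\models\varphi$ for all $v$ with $w R_i v$. $\varphi$ is EL-valid if true at every world of every EL model. Agent-knowledge logic: fix pairwise disjoint sets $\mathbf{Prop}_A,\mathbf{Prop}_K,\mathbf{Nom}_A,\mathbf{Nom}_K$. Formulas: $\varphi ::= p_A \mid p_K \mid a \mid k \mid \neg\varphi \mid \varphi\land\varphi \mid \Box_A\varphi \mid \Box_K\varphi \mid @_a\varphi \mid @_k\varphi$. An AK model is $(W_A, W_K, (R_y)_{y \in W_K}, (S_x)_{x \in W_A}, V)$ with $W_A,W_K$ non-empty, $R_y$ binary relations on $W_A$, $S_x$ binary relations on $W_K$, $V$ sending $\mathbf{Prop}_A\cup\mathbf{Nom}_A$ to subsets of $W_A$ and $\mathbf{Prop}_K\cup\mathbf{Nom}_K$ to subsets of $W_K$, with $V(a)=\{a^V\}$ and $V(k)=\{k^V\}$ singletons for nominals. Satisfaction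 at $(x,y)$: $p_A$ iff $x\in V(p_A)$; $p_K$ iff $y\in V(p_K)$; $a$ iff $x=a^V$; $k$ iff $y=k^V$; Booleans as usual; $\Box_A\varphi$ iff $(x',y)\models\varphi$ for all $x'$ with $xR_yx'$; $\Box_K\varphi$ iff $(x,y')\models\varphi$ for all $y'$ with $yS_xy'$; $@_a\varphi$ iff $(a^V,y)\models\varphi$; $@_k\varphi$ iff $(x,k^V)\models\varphi$. A formula is AK-valid if true at every pair of every AK model. Translation $T$: $T$ restricted to $\mathbf{Prop}$ is a bijection $\mathbf{Prop}\to\mathbf{Prop}_K$, $T$ restricted to $\mathbf{A}$ is a bijection $\mathbf{A}\to\mathbf{Nom}_A$, $T(\neg\varphi)=\neg T(\varphi)$, $T(\varphi\land\psi)=T(\varphi)\land T(\psi)$, $T(K_i\varphi)=@_{T(i)}\Box_K T(\varphi)$. *)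

Set Implicit Arguments.

Definition bijective {X Y : Type} (f : X -> Y) : Prop :=
  exists g : Y -> X, (forall x, g (f x) = x) /\ (forall y, f (g y) = y).

Inductive el_form (Prop_ Ag : Type) : Type :=
| ELVar : Prop_ -> el_form Prop_ Ag
| ELNeg : el_form Prop_ Ag -> el_form Prop_ Ag
| ELAnd : el_form Prop_ Ag -> el_form Prop_ Ag -> el_form Prop_ Ag
| ELK   : Ag -> el_form Prop_ Ag -> el_form Prop_ Ag.
Arguments ELVar {Prop_ Ag}. Arguments ELNeg {Prop_ Ag}.
Arguments ELAnd {Prop_ Ag}. Arguments ELK {Prop_ Ag}.

Record el_model (Prop_ Ag : Type) : Type := {
  el_W : Type;
  el_W_inhabited : inhabited el_W;
  el_R : Ag -> el_W -> el_W -> Prop;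
  el_V : Prop_ -> el_W -> Prop }.

Fixpoint el_sat {Prop_ Ag} (M : el_model Prop_ Ag) (w : el_W M)
  (phi : el_form Prop_ Ag) : Prop :=
  match phi with
  | ELVar p => el_V M p w
  | ELNeg f => ~ el_sat M w f
  | ELAnd f g => el_sat M w f /\ el_sat M w g
  | ELK i f => forall v, el_R M i w v -> el_sat M v f
  end.

Definition el_valid {Prop_ Ag} (phi : el_form Prop_ Ag) : Prop :=
  forall (M : el_model Prop_ Ag) (w : el_W M), el_sat M w phi.

(* The four pairwise disjoint sets Prop_A, Prop_K, Nom_A, Nom_K are the
   argument types PA, PK, NA, NK; disjointness is built in by using
   distinct constructors. *)
Inductive ak_form (PA PK NA NK : Type) : Type :=
| AKpA  : PA -> ak_form PA PK NA NK
| AKpK  : PK -> ak_form PA PK NA NK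
| AKnA  : NA -> ak_form PA PK NA NK
| AKnK  : NK -> ak_form PA PK NA NK
| AKNeg : ak_form PA PK NA NK -> ak_form PA PK NA NK
| AKAnd : ak_form PA PK NA NK -> ak_form PA PK NA NK -> ak_form PA PK NA NK
| AKBoxA : ak_form PA PK NA NK -> ak_form PA PK NA NK
| AKBoxK : ak_form PA PK NA NK -> ak_form PA PK NA NK
| AKAtA : NA -> ak_form PA PK NA NK -> ak_form PA PK NA NK
| AKAtK : NK -> ak_form PA PK NA NK -> ak_form PA PK NA NK.
Arguments AKpA {PA PK NA NK}. Arguments AKpK {PA PK NA NK}.
Arguments AKnA {PA PK NA NK}. Arguments AKnK {PA PK NA NK}.
Arguments AKNeg {PA PK NA NK}. Arguments AKAnd {PA PK NA NK}.
Arguments AKBoxA {PA PK NA NK}. Arguments AKBoxK {PA PK NA NK}.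
Arguments AKAtA {PA PK NA NK}. Arguments AKAtK {PA PK NA NK}.

(* A nominal's valuation V(a) = {a^V} is represented by the element a^V. *)
Record ak_model (PA PK NA NK : Type) : Type := {
  ak_WA : Type;
  ak_WK : Type;
  ak_WA_inhabited : inhabited ak_WA;
  ak_WK_inhabited : inhabited ak_WK;
  ak_R : ak_WK -> ak_WA -> ak_WA -> Prop;
  ak_S : ak_WA -> ak_WK -> ak_WK -> Prop;
  ak_VA : PA -> ak_WA -> Prop;
  ak_VK : PK -> ak_WK -> Prop;
  ak_nomA : NA -> ak_WA;
  ak_nomK : NK -> ak_WK }.

Fixpoint ak_sat {PA PK NA NK} (M : ak_model PA PK NA NK)
  (x : ak_WA M) (y : ak_WK M) (phi : ak_form PA PK NA NK) : Prop :=
  match phi with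
  | AKpA p => ak_VA M p x
  | AKpK p => ak_VK M p y
  | AKnA a => x = ak_nomA M a
  | AKnK k => y = ak_nomK M k
  | AKNeg f => ~ ak_sat M x y f
  | AKAnd f g => ak_sat M x y f /\ ak_sat M x y g
  | AKBoxA f => forall x', ak_R M y x x' -> ak_sat M x' y f
  | AKBoxK f => forall y', ak_S M x y y' -> ak_sat M x y' f
  | AKAtA a f => ak_sat M (ak_nomA M a) y f
  | AKAtK k f => ak_sat M x (ak_nomK M k) f
  end.

Definition ak_valid {PA PK NA NK} (phi : ak_form PA PK NA NK) : Prop :=
  forall (M : ak_model PA PK NA NK) (x : ak_WA M) (y : ak_WK M),
    ak_sat M x y phi.

Fixpoint translate {Prop_ Ag PA PK NA NK : Type}
  (tp : Prop_ -> PK) (ta : Ag -> NA) (phi : el_form Prop_ Ag)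
  : ak_form PA PK NA NK :=
  match phi with
  | ELVar p => AKpK (tp p)
  | ELNeg f => AKNeg (translate tp ta f)
  | ELAnd f g => AKAnd (translate tp ta f) (translate tp ta g)
  | ELK i f => AKAtA (ta i) (AKBoxK (translate tp ta f))
  end.

(* An AK model N yields an EL model on W_K in which agent i sees through the
   relation S indexed by the A-world named T(i); since T(phi) only mentions
   K-propositions and A-nominals, its truth at (x, y) is the truth of phi at y
   there, whatever x is.  Conversely an EL model is embedded in an AK model
   whose A-worlds are the A-nominals and whose K-worlds are the EL worlds (each
   plus a spare world, which also names every K-nominal), with S_(T i) = R_i;
   only injectivity of T on propositions and agents is needed for this. *)
From Stdlib Require Import Setoid.

Lemma bijective_inj {X Y : Type} (f : X -> Y) :
  bijective f -> forall x x', f x = f x' -> x = x'.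
Proof.
  intros [g [gK _]] x x' Hf.
  rewrite <- (gK x), <- (gK x'), Hf; reflexivity.
Qed.

Section AKToEL.
Variables (Prop_ Ag PA PK NA NK : Type) (tp : Prop_ -> PK) (ta : Ag -> NA).

Definition el_of_ak (N : ak_model PA PK NA NK) : el_model Prop_ Ag :=
  {| el_W := ak_WK N;
     el_W_inhabited := ak_WK_inhabited N;
     el_R := fun i => ak_S N (ak_nomA N (ta i));
     el_V := fun p => ak_VK N (tp p) |}.

Lemma ak_sat_translate_el_of_ak (N : ak_model PA PK NA NK)
    (phi : el_form Prop_ Ag) (x : ak_WA N) (y : ak_WK N) :
  ak_sat N x y (@translate Prop_ Ag PA PK NA NK tp ta phi)
  <-> el_sat (el_of_ak N) y phi.
Proof.
  revert x y; induction phi as [p | f IHf | f IHf g IHg | i f IHf];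
    intros x y; simpl.
  - reflexivity.
  - rewrite IHf; reflexivity.
  - rewrite IHf, IHg; reflexivity.
  - split; intros H v Hv.
    + apply (IHf (ak_nomA N (ta i))), H, Hv.
    + apply (IHf (ak_nomA N (ta i))), H, Hv.
Qed.

End AKToEL.

Section ELToAK.
Variables (Prop_ Ag PA PK NA NK : Type) (tp : Prop_ -> PK) (ta : Ag -> NA).
Hypothesis tp_inj : forall p q, tp p = tp q -> p = q.
Hypothesis ta_inj : forall i j, ta i = ta j -> i = j.

Definition ak_of_el (M : el_model Prop_ Ag) : ak_model PA PK NA NK :=
  {| ak_WA := option NA;
     ak_WK := option (el_W M);
     ak_WA_inhabited := inhabits None;
     ak_WK_inhabited := inhabits None;
     ak_R := fun _ _ _ => True;
     ak_S := fun x y y' =>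
       match x, y, y' with
       | Some a, Some w, Some v => exists i, ta i = a /\ el_R M i w v
       | _, _, _ => False
       end;
     ak_VA := fun _ _ => True;
     ak_VK := fun p y =>
       match y with
       | Some w => exists q, tp q = p /\ el_V M q w
       | None => False
       end;
     ak_nomA := Some;
     ak_nomK := fun _ => None |}.

Lemma ak_sat_translate_ak_of_el (M : el_model Prop_ Ag)
    (phi : el_form Prop_ Ag) (x : option NA) (w : el_W M) :
  ak_sat (ak_of_el M) x (Some w) (@translate Prop_ Ag PA PK NA NK tp ta phi)
  <-> el_sat M w phi.
Proof.
  revert x w; induction phi as [p | f IHf | f IHf g IHg | i f IHf];
    intros x w; simpl.
  - split.
    + intros [q [Hq Hv]]; rewrite <- (tp_inj q p Hq); exact Hv.
    + intros Hv; exists p; split; [reflexivity | exact Hv].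
  - rewrite IHf; reflexivity.
  - rewrite IHf, IHg; reflexivity.
  - split.
    + intros H v Hv.
      apply (IHf (Some (ta i))), H.
      exists i; split; [reflexivity | exact Hv].
    + intros H [v |] Hv; [| destruct Hv].
      destruct Hv as [j [Hj Hv]]; rewrite (ta_inj j i Hj) in Hv.
      apply (IHf (Some (ta i))), H, Hv.
Qed.

End ELToAK.

Theorem mainTheorem2 (Prop_ Ag PA PK NA NK : Type)
  (tp : Prop_ -> PK) (ta : Ag -> NA)
  (Htp : bijective tp) (Hta : bijective ta)
  (phi : el_form Prop_ Ag) :
  el_valid phi <-> ak_valid (@translate Prop_ Ag PA PK NA NK tp ta phi).
Proof.
  split.
  - intros Hvalid N x y.
    apply ak_sat_translate_el_of_ak, Hvalid.
  - intros Hvalid M w.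
    apply (@ak_sat_translate_ak_of_el Prop_ Ag PA PK NA NK tp ta
             (bijective_inj tp Htp) (bijective_inj ta Hta) M phi None w).
    apply Hvalid.
Qed.
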